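(* Let $M$ be a simply-connected domain in the Minkowski plane $(\mathbb{R}^2(u,v),du\,dv)$ and $\omega,Q,R:M\to\mathbb{R}$ smooth. (1) If $\Phi=(\Phi_1,\Phi_2):M\to\mathrm{SL}_2\mathbb{R}\times\mathrm{SL}_2\mathbb{R}$ satisfies $(\Phi_i)_u=\Phi_i\mathcal U_i$, $(\Phi_i)_v=\Phi_i\mathcal V_i$ ($i=1,2$) with $$\mathcal U_1=\begin{pmatrix}\frac{\omega_u}{4}&e^{\omega/2}\\-e^{-\omega/2}Q&-\frac{\omega_u}{4}\end{pmatrix},\ \mathcal V_1=\begin{pmatrix}-\frac{\omega_v}{4}&e^{-\omega/2}R\\0&\frac{\omega_v}{4}\end{pmatrix},\ \mathcal U_2=\begin{pmatrix}-\frac{\omega_u}{4}&e^{-\omega/2}Q\\0&\frac{\omega_u}{4}\end{pmatrix},\ \mathcal V_2=\begin{pmatrix}\frac{\omega_v}{4}&e^{\omega/2}\\-e^{-\omega/2}R&-\frac{\omega_v}{4}\end{pmatrix},$$ then $\varphi=\Phi_1\Phi_2^t:M\to\mathbb{H}^3_1(-1)$ is a conformal timelike immersion of constant mean curvature $1$. (2) If $\Psi=(\Psi_1,\Psi_2):M\to\mathrm{SL}_2\mathbb{R}\times\mathrm{SL}_2\mathbb{R}$ satisfies $(\Psi_1)_u=\Psi_1\mathcal U_1$, $(\Psi_1)_v=\Psi_1\mathcal V_1$ (as in (1)) and $(\Psi_2)_u=\Psi_2\begin{pmatrix}\frac{\omega_u}{4}&0\\-e^{-\omega/2}Q&-\frac{\omega_u}{4}\end{pmatrix}$,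 $(\Psi_2)_v=\Psi_2\begin{pmatrix}-\frac{\omega_v}{4}&e^{-\omega/2}R\\-e^{\omega/2}&\frac{\omega_v}{4}\end{pmatrix}$, then $\psi=\Psi_1\Psi_2^{-1}:M\to\mathbb{H}^3_1(-1)$ is a conformal timelike immersion of constant mean curvature $1$.
   Context: $\mathbb{E}^4_2$ (metric $-(dx_0)^2-(dx_1)^2+(dx_2)^2+(dx_3)^2$) is identified with $M_2(\mathbb{R})$ via $(x_0,x_1,x_2,x_3)\mapsto \begin{pmatrix}x_0+x_3& x_1+x_2\\ -x_1+x_2 & x_0-x_3\end{pmatrix}$, with $\langle u,v\rangle=\tfrac12\{\operatorname{tr}(uv)-\operatorname{tr}u\operatorname{tr}v\}$; then $\mathbb{H}^3_1(-1)=\{\langle x,x\rangle=-1\}=\mathrm{SL}_2\mathbb{R}$. Conformal timelike with null coordinates $(u,v)$: $\langle\varphi_u,\varphi_u\rangle=\langle\varphi_v,\varphi_v\rangle=0$, $\langle\varphi_u,\varphi_v\rangle=\tfrac12e^\omega$. Mean curvature with respect to the unit normal $N=\Phi_1\mathbf k'\Phi_2^t$ (resp. $\Psi_1\mathbf k'\Psi_2^{-1}$), $\mathbf k'=\mathrm{diag}(1,-1)$, is $H=2e^{-\omega}\langle\varphi_{uv},N\rangle$. *)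

From Stdlib Require Import Reals List.
From Coquelicot Require Import Coquelicot.
Open Scope R_scope.

Definition pt := (R * R)%type.

Definition pu (f : pt -> R) : pt -> R :=
  fun p => Derive (fun t => f (t, snd p)) (fst p).
Definition pv (f : pt -> R) : pt -> R :=
  fun p => Derive (fun t => f (fst p, t)) (snd p).

(** Iterated partial derivative along a word of directions (true = u, false = v). *)
Fixpoint dword (w : list bool) (f : pt -> R) : pt -> R :=
  match w with
  | nil => f
  | b :: w' => (if b then pu else pv) (dword w' f)
  end.

Definition smooth_on (M : pt -> Prop) (f : pt -> R) : Prop :=
  forall (w : list bool) (p : pt), M p ->
    continuous (dword w f) p /\
    ex_derive (fun t => dword w f (t, snd p)) (fst p) /\
    ex_derive (fun t => dword w f (fst p, t)) (snd p).

Definition in01 (t : R) : Prop := 0 <= t <= 1.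

Definition path_connected (M : pt -> Prop) : Prop :=
  forall p q, M p -> M q ->
    exists g : R -> pt, (forall t, continuous g t) /\
      (forall t, in01 t -> M (g t)) /\ g 0 = p /\ g 1 = q.

Definition loops_contractible (M : pt -> Prop) : Prop :=
  forall g : R -> pt, (forall t, continuous g t) ->
    (forall t, in01 t -> M (g t)) -> g 0 = g 1 ->
    exists (H : pt -> pt) (p0 : pt),
      (forall x, continuous H x) /\
      (forall s t, in01 s -> in01 t -> M (H (s, t))) /\
      (forall s, H (s, 0) = g s) /\
      (forall s, H (s, 1) = p0) /\
      (forall t, H (0, t) = H (1, t)).

Definition simply_connected_domain (M : pt -> Prop) : Prop :=
  open M /\ (exists p, M p) /\ path_connected M /\ loops_contractible M.

(** * 2x2 real matrices, identified with E^4_2 as in the paper. *)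
Record mat2 := Mat2 { m11 : R; m12 : R; m21 : R; m22 : R }.

Definition mmul (A B : mat2) : mat2 :=
  Mat2 (m11 A * m11 B + m12 A * m21 B) (m11 A * m12 B + m12 A * m22 B)
       (m21 A * m11 B + m22 A * m21 B) (m21 A * m12 B + m22 A * m22 B).
Definition mtr (A : mat2) : mat2 := Mat2 (m11 A) (m21 A) (m12 A) (m22 A).
Definition mdet (A : mat2) : R := m11 A * m22 A - m12 A * m21 A.
Definition mtrace (A : mat2) : R := m11 A + m22 A.
Definition minv (A : mat2) : mat2 :=
  Mat2 (m22 A / mdet A) (- m12 A / mdet A) (- m21 A / mdet A) (m11 A / mdet A).
Definition madd (A B : mat2) : mat2 :=
  Mat2 (m11 A + m11 B) (m12 A + m12 B) (m21 A + m21 B) (m22 A + m22 B).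
Definition mscal (a : R) (A : mat2) : mat2 :=
  Mat2 (a * m11 A) (a * m12 A) (a * m21 A) (a * m22 A).
Definition mzero : mat2 := Mat2 0 0 0 0.

(** <u,v> = 1/2 { tr(uv) - tr u tr v }  (metric of E^4_2). *)
Definition ip (A B : mat2) : R :=
  / 2 * (mtrace (mmul A B) - mtrace A * mtrace B).

Definition kp : mat2 := Mat2 1 0 0 (-1).

Definition in_H31 (A : mat2) : Prop := ip A A = -1.

Definition mpu (F : pt -> mat2) : pt -> mat2 := fun p =>
  Mat2 (pu (fun q => m11 (F q)) p) (pu (fun q => m12 (F q)) p)
       (pu (fun q => m21 (F q)) p) (pu (fun q => m22 (F q)) p).
Definition mpv (F : pt -> mat2) : pt -> mat2 := fun p =>
  Mat2 (pv (fun q => m11 (F q)) p) (pv (fun q => m12 (F q)) p)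
       (pv (fun q => m21 (F q)) p) (pv (fun q => m22 (F q)) p).

Definition msmooth_on (M : pt -> Prop) (F : pt -> mat2) : Prop :=
  smooth_on M (fun q => m11 (F q)) /\ smooth_on M (fun q => m12 (F q)) /\
  smooth_on M (fun q => m21 (F q)) /\ smooth_on M (fun q => m22 (F q)).

Definition has_pu (M : pt -> Prop) (F G : pt -> mat2) : Prop :=
  forall p, M p ->
    is_derive (fun t => m11 (F (t, snd p))) (fst p) (m11 (G p)) /\
    is_derive (fun t => m12 (F (t, snd p))) (fst p) (m12 (G p)) /\
    is_derive (fun t => m21 (F (t, snd p))) (fst p) (m21 (G p)) /\
    is_derive (fun t => m22 (F (t, snd p))) (fst p) (m22 (G p)).
Definition has_pv (M : pt -> Prop) (F G : pt -> mat2) : Prop :=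
  forall p, M p ->
    is_derive (fun t => m11 (F (fst p, t))) (snd p) (m11 (G p)) /\
    is_derive (fun t => m12 (F (fst p, t))) (snd p) (m12 (G p)) /\
    is_derive (fun t => m21 (F (fst p, t))) (snd p) (m21 (G p)) /\
    is_derive (fun t => m22 (F (fst p, t))) (snd p) (m22 (G p)).

Definition SL2_valued (M : pt -> Prop) (F : pt -> mat2) : Prop :=
  forall p, M p -> mdet (F p) = 1.

(** * Conclusion: phi : M -> H^3_1(-1) is a smooth conformal timelike immersion,
    conformal factor e^omega in the null coordinates (u,v)
    (<phi_u,phi_u> = <phi_v,phi_v> = 0, <phi_u,phi_v> = e^omega / 2),
    with mean curvature H = 2 e^{-omega} <phi_uv, N> identically equal to 1. *)
Definition cmc1_conformal_timelike_immersion (M : pt -> Prop)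
    (omega : pt -> R) (phi N : pt -> mat2) : Prop :=
  msmooth_on M phi /\
  (forall p, M p ->
     in_H31 (phi p) /\
     (forall a b : R, madd (mscal a (mpu phi p)) (mscal b (mpv phi p)) = mzero ->
        a = 0 /\ b = 0) /\
     ip (mpu phi p) (mpu phi p) = 0 /\
     ip (mpv phi p) (mpv phi p) = 0 /\
     ip (mpu phi p) (mpv phi p) = / 2 * exp (omega p) /\
     ip (mpu phi p) (mpu phi p) * ip (mpv phi p) (mpv phi p)
       - (ip (mpu phi p) (mpv phi p)) ^ 2 < 0 /\
     2 * exp (- omega p) * ip (mpv (mpu phi) p) (N p) = 1).

Definition U1 (omega Q : pt -> R) (p : pt) : mat2 :=
  Mat2 (pu omega p / 4) (exp (omega p / 2))
       (- exp (- omega p / 2) * Q p) (- (pu omega p / 4)).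
Definition V1 (omega Rf : pt -> R) (p : pt) : mat2 :=
  Mat2 (- (pv omega p / 4)) (exp (- omega p / 2) * Rf p)
       0 (pv omega p / 4).
Definition U2 (omega Q : pt -> R) (p : pt) : mat2 :=
  Mat2 (- (pu omega p / 4)) (exp (- omega p / 2) * Q p)
       0 (pu omega p / 4).
Definition V2 (omega Rf : pt -> R) (p : pt) : mat2 :=
  Mat2 (pv omega p / 4) (exp (omega p / 2))
       (- exp (- omega p / 2) * Rf p) (- (pv omega p / 4)).
Definition U2' (omega Q : pt -> R) (p : pt) : mat2 :=
  Mat2 (pu omega p / 4) 0
       (- exp (- omega p / 2) * Q p) (- (pu omega p / 4)).
Definition V2' (omega Rf : pt -> R) (p : pt) : mat2 :=
  Mat2 (- (pv omega p / 4)) (exp (- omega p / 2) * Rf p)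
       (- exp (omega p / 2)) (pv omega p / 4).

(* Write phi = P B with P, B in SL_2 R.  Since <x, x> = - det x on E^4_2, the map
   x |-> P x B is an isometry, so everything reduces to the Lax matrices.  In both parts
   they add up to phi_u = P e12(e^(omega/2)) B and phi_v = P e21(e^(omega/2)) B, a null
   pair with <phi_u, phi_v> = e^omega / 2.  Differentiating once more, phi_uv = P X B,
   and <phi_uv, N> = <X, k'> only sees the diagonal of X, which is diag(e^omega, 0)
   because the lower-left entry of V1 vanishes; hence H = 1.  In part (1) B = Phi_2^t,
   in part (2) B = Psi_2^(-1) = adj Psi_2, and the Lax pairs transform accordingly. *)
From Stdlib Require Import Reals Lra List FunctionalExtensionality.
From Coquelicot Require Import Coquelicot.
Open Scope R_scope.

Lemma near_u (M P : pt -> Prop) (p : pt) :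
  open M -> M p -> (forall q, M q -> P q) -> locally (fst p) (fun t => P (t, snd p)).
Proof.
  intros HM Hp HP. destruct (HM p Hp) as [eps He]. exists eps. intros t Ht.
  apply HP, He. destruct p as [x y]. split; [exact Ht | apply ball_center].
Qed.

Lemma near_v (M P : pt -> Prop) (p : pt) :
  open M -> M p -> (forall q, M q -> P q) -> locally (snd p) (fun t => P (fst p, t)).
Proof.
  intros HM Hp HP. destruct (HM p Hp) as [eps He]. exists eps. intros t Ht.
  apply HP, He. destruct p as [x y]. split; [apply ball_center | exact Ht].
Qed.

Lemma dword_app (w w' : list bool) (f : pt -> R) : dword (w ++ w') f = dword w (dword w' f).
Proof. induction w as [|b w IH]; simpl; [reflexivity | now rewrite IH]. Qed.

Lemma smooth_on_pu (M : pt -> Prop) (f : pt -> R) : smooth_on M f -> smooth_on M (pu f).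
Proof. intros H w p Hp. rewrite <- (dword_app w (true :: nil)). now apply H. Qed.

Lemma smooth_on_pv (M : pt -> Prop) (f : pt -> R) : smooth_on M f -> smooth_on M (pv f).
Proof. intros H w p Hp. rewrite <- (dword_app w (false :: nil)). now apply H. Qed.

Lemma dword_opp (w : list bool) (f : pt -> R) :
  dword w (fun q => - f q) = fun q => - dword w f q.
Proof.
  induction w as [|b w IH]; simpl; [reflexivity|]. rewrite IH.
  apply functional_extensionality; intro q. destruct b; apply Derive_opp.
Qed.

Lemma smooth_on_opp (M : pt -> Prop) (f : pt -> R) :
  smooth_on M f -> smooth_on M (fun q => - f q).
Proof.
  intros H w p Hp. rewrite dword_opp. destruct (H w p Hp) as (Hc & Hu & Hv).
  split; [|split].
  - exact (continuous_opp (dword w f) p Hc).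
  - exact (ex_derive_opp (fun t => dword w f (t, snd p)) (fst p) Hu).
  - exact (ex_derive_opp (fun t => dword w f (fst p, t)) (snd p) Hv).
Qed.

Section SumsOfProducts.
Variable M : pt -> Prop.
Hypothesis HM : open M.

(* Closed under [pu] and [pv] by the product rule, which only holds on M: hence the
   last constructor. *)
Inductive sum_of_products : (pt -> R) -> Prop :=
| sop_smooth f : smooth_on M f -> sum_of_products f
| sop_mult f g : smooth_on M f -> smooth_on M g -> sum_of_products (fun q => f q * g q)
| sop_plus h1 h2 : sum_of_products h1 -> sum_of_products h2 ->
    sum_of_products (fun q => h1 q + h2 q)
| sop_agree h1 h2 : sum_of_products h1 -> (forall q, M q -> h1 q = h2 q) ->
    sum_of_products h2.

Lemma sum_of_products_regular (h : pt -> R) : sum_of_products h -> forall p, M p ->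
  continuous h p /\ ex_derive (fun t => h (t, snd p)) (fst p) /\
  ex_derive (fun t => h (fst p, t)) (snd p).
Proof.
  induction 1 as [f Hf|f g Hf Hg|h1 h2 _ IH1 _ IH2|h1 h2 _ IH E]; intros p Hp.
  - exact (Hf nil p Hp).
  - destruct (Hf nil p Hp) as (a1 & a2 & a3), (Hg nil p Hp) as (b1 & b2 & b3).
    split; [|split].
    + exact (continuous_mult f g p a1 b1).
    + exact (ex_derive_mult (fun t => f (t, snd p)) (fun t => g (t, snd p)) _ a2 b2).
    + exact (ex_derive_mult (fun t => f (fst p, t)) (fun t => g (fst p, t)) _ a3 b3).
  - destruct (IH1 p Hp) as (a1 & a2 & a3), (IH2 p Hp) as (b1 & b2 & b3).
    split; [|split].
    + exact (continuous_plus h1 h2 p a1 b1).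
    + exact (ex_derive_plus (fun t => h1 (t, snd p)) (fun t => h2 (t, snd p)) _ a2 b2).
    + exact (ex_derive_plus (fun t => h1 (fst p, t)) (fun t => h2 (fst p, t)) _ a3 b3).
  - destruct (IH p Hp) as (a1 & a2 & a3). split; [|split].
    + apply (continuous_ext_loc _ h1); [|exact a1].
      destruct (HM p Hp) as [eps He]. exists eps. intros y Hy. apply E, He, Hy.
    + exact (ex_derive_ext_loc _ _ _ (near_u M _ p HM Hp E) a2).
    + exact (ex_derive_ext_loc _ _ _ (near_v M _ p HM Hp E) a3).
Qed.

Lemma sum_of_products_pu (h : pt -> R) : sum_of_products h -> sum_of_products (pu h).
Proof.
  induction 1 as [f Hf|f g Hf Hg|h1 h2 G1 IH1 G2 IH2|h1 h2 G1 IH E].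
  - now apply sop_smooth, smooth_on_pu.
  - apply (sop_agree (fun q => pu f q * g q + f q * pu g q)).
    + apply sop_plus; apply sop_mult; auto using smooth_on_pu.
    + intros [x y] Hq. destruct (Hf nil _ Hq) as (_ & a & _), (Hg nil _ Hq) as (_ & b & _).
      symmetry. exact (Derive_mult (fun t => f (t, y)) (fun t => g (t, y)) x a b).
  - apply (sop_agree (fun q => pu h1 q + pu h2 q)); [now apply sop_plus|].
    intros q Hq.
    destruct (sum_of_products_regular _ G1 q Hq) as (_ & a & _),
             (sum_of_products_regular _ G2 q Hq) as (_ & b & _).
    symmetry. exact (Derive_plus (fun t => h1 (t, snd q)) (fun t => h2 (t, snd q)) _ a b).
  - apply (sop_agree (pu h1)); [exact IH|].
    intros q Hq. exact (Derive_ext_loc _ _ _ (near_u M _ q HM Hq E)).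
Qed.

Lemma sum_of_products_pv (h : pt -> R) : sum_of_products h -> sum_of_products (pv h).
Proof.
  induction 1 as [f Hf|f g Hf Hg|h1 h2 G1 IH1 G2 IH2|h1 h2 G1 IH E].
  - now apply sop_smooth, smooth_on_pv.
  - apply (sop_agree (fun q => pv f q * g q + f q * pv g q)).
    + apply sop_plus; apply sop_mult; auto using smooth_on_pv.
    + intros [x y] Hq. destruct (Hf nil _ Hq) as (_ & _ & a), (Hg nil _ Hq) as (_ & _ & b).
      symmetry. exact (Derive_mult (fun t => f (x, t)) (fun t => g (x, t)) y a b).
  - apply (sop_agree (fun q => pv h1 q + pv h2 q)); [now apply sop_plus|].
    intros q Hq.
    destruct (sum_of_products_regular _ G1 q Hq) as (_ & _ & a),
             (sum_of_products_regular _ G2 q Hq) as (_ & _ & b).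
    symmetry. exact (Derive_plus (fun t => h1 (fst q, t)) (fun t => h2 (fst q, t)) _ a b).
  - apply (sop_agree (pv h1)); [exact IH|].
    intros q Hq. exact (Derive_ext_loc _ _ _ (near_v M _ q HM Hq E)).
Qed.

Lemma sum_of_products_smooth_on (h : pt -> R) : sum_of_products h -> smooth_on M h.
Proof.
  intros G w. apply sum_of_products_regular.
  induction w as [|[] w IH]; simpl;
    auto using sum_of_products_pu, sum_of_products_pv.
Qed.

Lemma smooth_on_plus_mult (f1 g1 f2 g2 : pt -> R) :
  smooth_on M f1 -> smooth_on M g1 -> smooth_on M f2 -> smooth_on M g2 ->
  smooth_on M (fun q => f1 q * g1 q + f2 q * g2 q).
Proof. intros. apply sum_of_products_smooth_on. apply sop_plus; now apply sop_mult. Qed.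

Lemma smooth_on_agree (f g : pt -> R) :
  smooth_on M f -> (forall q, M q -> f q = g q) -> smooth_on M g.
Proof. intros Hf E. apply sum_of_products_smooth_on. exact (sop_agree _ _ (sop_smooth _ Hf) E). Qed.

End SumsOfProducts.

Definition adj (A : mat2) : mat2 := Mat2 (m22 A) (- m12 A) (- m21 A) (m11 A).
Definition e12 (a : R) : mat2 := Mat2 0 a 0 0.
Definition e21 (a : R) : mat2 := Mat2 0 0 a 0.

Lemma mat2_ext (A B : mat2) :
  m11 A = m11 B -> m12 A = m12 B -> m21 A = m21 B -> m22 A = m22 B -> A = B.
Proof. destruct A, B; simpl; intros; subst; reflexivity. Qed.

Lemma mtr_mmul (A B : mat2) : mtr (mmul A B) = mmul (mtr B) (mtr A).
Proof. apply mat2_ext; simpl; ring. Qed.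

Lemma adj_mmul (A B : mat2) : adj (mmul A B) = mmul (adj B) (adj A).
Proof. apply mat2_ext; simpl; ring. Qed.

Lemma mdet_mtr (A : mat2) : mdet (mtr A) = mdet A.
Proof. unfold mdet; simpl; ring. Qed.

Lemma mdet_minv (A : mat2) : mdet A = 1 -> mdet (minv A) = 1.
Proof. intro d. unfold mdet at 1; simpl. rewrite d. unfold mdet in d; lra. Qed.

Lemma minv_adj (A : mat2) : mdet A = 1 -> minv A = adj A.
Proof. intro d. unfold minv. rewrite d. apply mat2_ext; simpl; field. Qed.

Lemma mdet_mmul (A B : mat2) : mdet (mmul A B) = mdet A * mdet B.
Proof. unfold mdet; simpl; ring. Qed.

Lemma ip_self (A : mat2) : ip A A = - mdet A.
Proof. unfold ip, mtrace, mdet; simpl; field. Qed.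

Lemma ip_sandwich (P X Y B : mat2) :
  ip (mmul (mmul P X) B) (mmul (mmul P Y) B) = mdet P * mdet B * ip X Y.
Proof. unfold ip, mtrace, mdet; simpl; field. Qed.

Lemma sandwich_eq0 (P X B : mat2) :
  mdet P = 1 -> mdet B = 1 -> mmul (mmul P X) B = mzero -> X = mzero.
Proof.
  intros dP dB E.
  assert (Hadj : mmul (mmul (adj P) (mmul (mmul P X) B)) (adj B)
                 = mmul (mmul (Mat2 (mdet P) 0 0 (mdet P)) X) (Mat2 (mdet B) 0 0 (mdet B))).
  { apply mat2_ext; unfold mdet; simpl; ring. }
  rewrite E, dP, dB in Hadj. destruct X; injection Hadj; simpl; intros; apply mat2_ext; simpl; lra.
Qed.

Lemma ip_e12_sandwich_kp (A B : mat2) (e d : R) :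
  ip (madd (madd (mmul A (e12 e)) (e12 d)) (mmul (e12 e) B)) kp = e * (m21 B - m21 A) / 2.
Proof. unfold ip, mtrace, kp; simpl; field. Qed.

Lemma is_derive_mult_plus (a b c d : R -> R) (x da db dc dd l : R) :
  is_derive a x da -> is_derive b x db -> is_derive c x dc -> is_derive d x dd ->
  l = da * b x + a x * db + (dc * d x + c x * dd) ->
  is_derive (fun t => a t * b t + c t * d t) x l.
Proof.
  intros Ha Hb Hc Hd ->.
  apply (is_derive_plus (fun t => a t * b t) (fun t => c t * d t)).
  - apply (is_derive_mult a b); auto. intros; apply Rmult_comm.
  - apply (is_derive_mult c d); auto. intros; apply Rmult_comm.
Qed.

Section MatrixDerivatives.
Variable M : pt -> Prop.

Lemma has_pu_value (F G G' : pt -> mat2) :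
  has_pu M F G -> (forall p, M p -> G p = G' p) -> has_pu M F G'.
Proof. intros H E p Hp. rewrite <- (E p Hp). auto. Qed.

Lemma has_pv_value (F G G' : pt -> mat2) :
  has_pv M F G -> (forall p, M p -> G p = G' p) -> has_pv M F G'.
Proof. intros H E p Hp. rewrite <- (E p Hp). auto. Qed.

Lemma mpu_of_has_pu (F G : pt -> mat2) (p : pt) : has_pu M F G -> M p -> mpu F p = G p.
Proof.
  intros H Hp. destruct (H p Hp) as (a1 & a2 & a3 & a4).
  apply mat2_ext; apply is_derive_unique; assumption.
Qed.

Lemma mpv_of_has_pv (F G : pt -> mat2) (p : pt) : has_pv M F G -> M p -> mpv F p = G p.
Proof.
  intros H Hp. destruct (H p Hp) as (a1 & a2 & a3 & a4).
  apply mat2_ext; apply is_derive_unique; assumption.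
Qed.

Lemma has_pu_mmul (F F' G G' : pt -> mat2) : has_pu M F F' -> has_pu M G G' ->
  has_pu M (fun p => mmul (F p) (G p))
    (fun p => madd (mmul (F' p) (G p)) (mmul (F p) (G' p))).
Proof.
  intros HF HG p Hp.
  destruct (HF p Hp) as (a1 & a2 & a3 & a4), (HG p Hp) as (b1 & b2 & b3 & b4).
  destruct p as [x y]; simpl in *. split; [|split; [|split]].
  - refine (is_derive_mult_plus _ _ _ _ _ _ _ _ _ _ a1 b1 a2 b3 _); simpl; ring.
  - refine (is_derive_mult_plus _ _ _ _ _ _ _ _ _ _ a1 b2 a2 b4 _); simpl; ring.
  - refine (is_derive_mult_plus _ _ _ _ _ _ _ _ _ _ a3 b1 a4 b3 _); simpl; ring.
  - refine (is_derive_mult_plus _ _ _ _ _ _ _ _ _ _ a3 b2 a4 b4 _); simpl; ring.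
Qed.

Lemma has_pv_mmul (F F' G G' : pt -> mat2) : has_pv M F F' -> has_pv M G G' ->
  has_pv M (fun p => mmul (F p) (G p))
    (fun p => madd (mmul (F' p) (G p)) (mmul (F p) (G' p))).
Proof.
  intros HF HG p Hp.
  destruct (HF p Hp) as (a1 & a2 & a3 & a4), (HG p Hp) as (b1 & b2 & b3 & b4).
  destruct p as [x y]; simpl in *. split; [|split; [|split]].
  - refine (is_derive_mult_plus _ _ _ _ _ _ _ _ _ _ a1 b1 a2 b3 _); simpl; ring.
  - refine (is_derive_mult_plus _ _ _ _ _ _ _ _ _ _ a1 b2 a2 b4 _); simpl; ring.
  - refine (is_derive_mult_plus _ _ _ _ _ _ _ _ _ _ a3 b1 a4 b3 _); simpl; ring.
  - refine (is_derive_mult_plus _ _ _ _ _ _ _ _ _ _ a3 b2 a4 b4 _); simpl; ring.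
Qed.

Lemma has_pu_mtr (F G : pt -> mat2) :
  has_pu M F G -> has_pu M (fun p => mtr (F p)) (fun p => mtr (G p)).
Proof. intros H p Hp. destruct (H p Hp) as (a1 & a2 & a3 & a4). now split; [|split; [|split]]. Qed.

Lemma has_pv_mtr (F G : pt -> mat2) :
  has_pv M F G -> has_pv M (fun p => mtr (F p)) (fun p => mtr (G p)).
Proof. intros H p Hp. destruct (H p Hp) as (a1 & a2 & a3 & a4). now split; [|split; [|split]]. Qed.

Lemma has_pu_adj (F G : pt -> mat2) :
  has_pu M F G -> has_pu M (fun p => adj (F p)) (fun p => adj (G p)).
Proof.
  intros H p Hp. destruct (H p Hp) as (a1 & a2 & a3 & a4).
  split; [|split; [|split]]; simpl; try assumption.
  - exact (is_derive_opp _ _ _ a2).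
  - exact (is_derive_opp _ _ _ a3).
Qed.

Lemma has_pv_adj (F G : pt -> mat2) :
  has_pv M F G -> has_pv M (fun p => adj (F p)) (fun p => adj (G p)).
Proof.
  intros H p Hp. destruct (H p Hp) as (a1 & a2 & a3 & a4).
  split; [|split; [|split]]; simpl; try assumption.
  - exact (is_derive_opp _ _ _ a2).
  - exact (is_derive_opp _ _ _ a3).
Qed.

Hypothesis HM : open M.

Lemma has_pu_agree (F F' G : pt -> mat2) :
  has_pu M F G -> (forall p, M p -> F p = F' p) -> has_pu M F' G.
Proof.
  intros H E p Hp. destruct (H p Hp) as (a1 & a2 & a3 & a4).
  assert (L : forall f : mat2 -> R,
             locally (fst p) (fun t => f (F (t, snd p)) = f (F' (t, snd p)))).
  { intro f. apply (near_u M (fun q => f (F q) = f (F' q)) p HM Hp). intros q Hq. now rewrite E. }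
  split; [|split; [|split]]; (eapply is_derive_ext_loc; [|eassumption]); apply L.
Qed.

Lemma has_pv_agree (F F' G : pt -> mat2) :
  has_pv M F G -> (forall p, M p -> F p = F' p) -> has_pv M F' G.
Proof.
  intros H E p Hp. destruct (H p Hp) as (a1 & a2 & a3 & a4).
  assert (L : forall f : mat2 -> R,
             locally (snd p) (fun t => f (F (fst p, t)) = f (F' (fst p, t)))).
  { intro f. apply (near_v M (fun q => f (F q) = f (F' q)) p HM Hp). intros q Hq. now rewrite E. }
  split; [|split; [|split]]; (eapply is_derive_ext_loc; [|eassumption]); apply L.
Qed.

End MatrixDerivatives.

Lemma is_derive_exp_half (g : R -> R) (x : R) : ex_derive g x ->
  is_derive (fun t => exp (g t / 2)) x (exp (g x / 2) * (Derive g x / 2)).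
Proof. intro Hg. auto_derive; [exact Hg|]. change (fun y => g y) with g. unfold Rdiv; ring. Qed.

Lemma has_pv_e12_exp_half (M : pt -> Prop) (omega : pt -> R) : smooth_on M omega ->
  has_pv M (fun p => e12 (exp (omega p / 2)))
    (fun p => e12 (exp (omega p / 2) * (pv omega p / 2))).
Proof.
  intros Hs [x y] Hp. destruct (Hs nil _ Hp) as (_ & _ & Hv). simpl in Hv |- *.
  split; [|split; [|split]]; try apply (is_derive_const (V := R_NormedModule)).
  exact (is_derive_exp_half (fun t => omega (x, t)) y Hv).
Qed.

Section SmoothMatrices.
Variable M : pt -> Prop.

Lemma msmooth_on_mtr (F : pt -> mat2) : msmooth_on M F -> msmooth_on M (fun p => mtr (F p)).
Proof. intros (s11 & s12 & s21 & s22). split; [|split; [|split]]; assumption. Qed.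

Lemma msmooth_on_adj (F : pt -> mat2) : msmooth_on M F -> msmooth_on M (fun p => adj (F p)).
Proof.
  intros (s11 & s12 & s21 & s22).
  split; [|split; [|split]]; simpl; auto using smooth_on_opp.
Qed.

Hypothesis HM : open M.

Lemma msmooth_on_mmul (F G : pt -> mat2) : msmooth_on M F -> msmooth_on M G ->
  msmooth_on M (fun p => mmul (F p) (G p)).
Proof.
  intros (f11 & f12 & f21 & f22) (g11 & g12 & g21 & g22).
  split; [|split; [|split]]; simpl; now apply smooth_on_plus_mult.
Qed.

Lemma msmooth_on_agree (F G : pt -> mat2) :
  msmooth_on M F -> (forall p, M p -> F p = G p) -> msmooth_on M G.
Proof.
  intros (f11 & f12 & f21 & f22) E.
  split; [|split; [|split]];
    [ apply (smooth_on_agree M HM _ _ f11) | apply (smooth_on_agree M HM _ _ f12)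
    | apply (smooth_on_agree M HM _ _ f21) | apply (smooth_on_agree M HM _ _ f22) ];
    intros q Hq; now rewrite E.
Qed.

End SmoothMatrices.

(** * The frame of a CMC 1 surface *)

Section Frame.
Variables (M : pt -> Prop) (omega : pt -> R) (P B Ua Ub Va Vb : pt -> mat2).
Hypotheses (HM : open M) (Homega : smooth_on M omega)
  (HsP : msmooth_on M P) (HsB : msmooth_on M B)
  (HdP : SL2_valued M P) (HdB : SL2_valued M B)
  (HPu : has_pu M P (fun p => mmul (P p) (Ua p)))
  (HBu : has_pu M B (fun p => mmul (Ub p) (B p)))
  (HPv : has_pv M P (fun p => mmul (P p) (Va p)))
  (HBv : has_pv M B (fun p => mmul (Vb p) (B p)))
  (HU : forall p, M p -> madd (Ua p) (Ub p) = e12 (exp (omega p / 2)))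
  (HV : forall p, M p -> madd (Va p) (Vb p) = e21 (exp (omega p / 2)))
  (HVa : forall p, M p -> m21 (Va p) = 0).

Lemma frame_pu : has_pu M (fun p => mmul (P p) (B p))
  (fun p => mmul (mmul (P p) (e12 (exp (omega p / 2)))) (B p)).
Proof.
  eapply has_pu_value; [exact (has_pu_mmul M _ _ _ _ HPu HBu)|].
  intros p Hp. rewrite <- (HU p Hp). apply mat2_ext; simpl; ring.
Qed.

Lemma frame_pv : has_pv M (fun p => mmul (P p) (B p))
  (fun p => mmul (mmul (P p) (e21 (exp (omega p / 2)))) (B p)).
Proof.
  eapply has_pv_value; [exact (has_pv_mmul M _ _ _ _ HPv HBv)|].
  intros p Hp. rewrite <- (HV p Hp). apply mat2_ext; simpl; ring.
Qed.

Lemma frame_puv : has_pv M (mpu (fun p => mmul (P p) (B p)))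
  (fun p => mmul (mmul (P p)
     (madd (madd (mmul (Va p) (e12 (exp (omega p / 2))))
                 (e12 (exp (omega p / 2) * (pv omega p / 2))))
           (mmul (e12 (exp (omega p / 2))) (Vb p)))) (B p)).
Proof.
  eapply has_pv_agree; [exact HM| |
    intros q Hq; symmetry; exact (mpu_of_has_pu M _ _ q frame_pu Hq)].
  eapply has_pv_value.
  - apply (has_pv_mmul M); [apply (has_pv_mmul M)|]; eauto using has_pv_e12_exp_half.
  - intros p Hp. apply mat2_ext; simpl; ring.
Qed.

Lemma frame_cmc1 : cmc1_conformal_timelike_immersion M omega
  (fun p => mmul (P p) (B p)) (fun p => mmul (mmul (P p) kp) (B p)).
Proof.
  split; [exact (msmooth_on_mmul M HM _ _ HsP HsB)|]. intros p Hp.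
  rewrite (mpu_of_has_pu M _ _ p frame_pu Hp), (mpv_of_has_pv M _ _ p frame_pv Hp),
    (mpv_of_has_pv M _ _ p frame_puv Hp), !ip_sandwich, (HdP p Hp), (HdB p Hp).
  set (E := exp (omega p / 2)).
  assert (HE : 0 < E) by apply exp_pos.
  assert (HE2 : E * E = exp (omega p)).
  { unfold E. rewrite <- exp_plus. f_equal. field. }
  assert (Hexp : exp (- omega p) * exp (omega p) = 1).
  { rewrite <- exp_plus, Rplus_opp_l. apply exp_0. }
  assert (Hb21 : m21 (Vb p) = E).
  { pose proof (f_equal m21 (HV p Hp)) as H21. simpl in H21.
    rewrite (HVa p Hp) in H21. unfold E. lra. }
  assert (Iuu : ip (e12 E) (e12 E) = 0) by (unfold ip, mtrace; simpl; ring).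
  assert (Ivv : ip (e21 E) (e21 E) = 0) by (unfold ip, mtrace; simpl; ring).
  assert (Iuv : ip (e12 E) (e21 E) = / 2 * exp (omega p)).
  { rewrite <- HE2. unfold ip, mtrace; simpl; field. }
  rewrite Iuu, Ivv, Iuv.
  split; [|split; [|split; [|split; [|split; [|split]]]]].
  - unfold in_H31. rewrite ip_self, mdet_mmul, (HdP p Hp), (HdB p Hp). ring.
  - intros a b Hab.
    assert (H0 : madd (mscal a (e12 E)) (mscal b (e21 E)) = mzero).
    { apply (sandwich_eq0 (P p) _ (B p) (HdP p Hp) (HdB p Hp)).
      rewrite <- Hab. apply mat2_ext; simpl; ring. }
    pose proof (f_equal m12 H0). pose proof (f_equal m21 H0). simpl in *. split; nra.
  - ring.
  - ring.
  - ring.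
  - pose proof (exp_pos (omega p)). nra.
  - rewrite ip_e12_sandwich_kp, Hb21, (HVa p Hp).
    transitivity (exp (- omega p) * (E * E)); [field|]. now rewrite HE2.
Qed.

End Frame.

Section Inverse.
Variables (M : pt -> Prop) (F U : pt -> mat2).
Hypotheses (HM : open M) (HdF : SL2_valued M F).

Lemma has_pu_minv : has_pu M F (fun p => mmul (F p) (U p)) ->
  has_pu M (fun p => minv (F p)) (fun p => mmul (adj (U p)) (minv (F p))).
Proof.
  intro H. apply (has_pu_agree M HM (fun p => adj (F p))).
  - eapply has_pu_value; [exact (has_pu_adj M _ _ H)|].
    intros p Hp. cbv beta. now rewrite adj_mmul, minv_adj by exact (HdF p Hp).
  - intros p Hp. symmetry. exact (minv_adj _ (HdF p Hp)).
Qed.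

Lemma has_pv_minv : has_pv M F (fun p => mmul (F p) (U p)) ->
  has_pv M (fun p => minv (F p)) (fun p => mmul (adj (U p)) (minv (F p))).
Proof.
  intro H. apply (has_pv_agree M HM (fun p => adj (F p))).
  - eapply has_pv_value; [exact (has_pv_adj M _ _ H)|].
    intros p Hp. cbv beta. now rewrite adj_mmul, minv_adj by exact (HdF p Hp).
  - intros p Hp. symmetry. exact (minv_adj _ (HdF p Hp)).
Qed.

End Inverse.

Lemma cmc1_Phi (M : pt -> Prop) (omega Q Rf : pt -> R) (Phi1 Phi2 : pt -> mat2) :
  open M -> smooth_on M omega ->
  msmooth_on M Phi1 -> msmooth_on M Phi2 -> SL2_valued M Phi1 -> SL2_valued M Phi2 ->
  has_pu M Phi1 (fun p => mmul (Phi1 p) (U1 omega Q p)) ->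
  has_pv M Phi1 (fun p => mmul (Phi1 p) (V1 omega Rf p)) ->
  has_pu M Phi2 (fun p => mmul (Phi2 p) (U2 omega Q p)) ->
  has_pv M Phi2 (fun p => mmul (Phi2 p) (V2 omega Rf p)) ->
  cmc1_conformal_timelike_immersion M omega
    (fun p => mmul (Phi1 p) (mtr (Phi2 p)))
    (fun p => mmul (mmul (Phi1 p) kp) (mtr (Phi2 p))).
Proof.
  intros HM Homega s1 s2 d1 d2 u1 v1 u2 v2.
  apply (frame_cmc1 M omega Phi1 (fun p => mtr (Phi2 p)) (U1 omega Q)
           (fun p => mtr (U2 omega Q p)) (V1 omega Rf) (fun p => mtr (V2 omega Rf p)));
    auto using msmooth_on_mtr.
  - intros p Hp. now rewrite mdet_mtr, d2.
  - eapply has_pu_value; [exact (has_pu_mtr M _ _ u2)|]. intros p _. apply mtr_mmul.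
  - eapply has_pv_value; [exact (has_pv_mtr M _ _ v2)|]. intros p _. apply mtr_mmul.
  - intros p _. apply mat2_ext; simpl; ring.
  - intros p _. apply mat2_ext; simpl; ring.
Qed.

Lemma cmc1_Psi (M : pt -> Prop) (omega Q Rf : pt -> R) (Psi1 Psi2 : pt -> mat2) :
  open M -> smooth_on M omega ->
  msmooth_on M Psi1 -> msmooth_on M Psi2 -> SL2_valued M Psi1 -> SL2_valued M Psi2 ->
  has_pu M Psi1 (fun p => mmul (Psi1 p) (U1 omega Q p)) ->
  has_pv M Psi1 (fun p => mmul (Psi1 p) (V1 omega Rf p)) ->
  has_pu M Psi2 (fun p => mmul (Psi2 p) (U2' omega Q p)) ->
  has_pv M Psi2 (fun p => mmul (Psi2 p) (V2' omega Rf p)) ->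
  cmc1_conformal_timelike_immersion M omega
    (fun p => mmul (Psi1 p) (minv (Psi2 p)))
    (fun p => mmul (mmul (Psi1 p) kp) (minv (Psi2 p))).
Proof.
  intros HM Homega s1 s2 d1 d2 u1 v1 u2 v2.
  apply (frame_cmc1 M omega Psi1 (fun p => minv (Psi2 p)) (U1 omega Q)
           (fun p => adj (U2' omega Q p)) (V1 omega Rf) (fun p => adj (V2' omega Rf p)));
    auto using has_pu_minv, has_pv_minv.
  - apply (msmooth_on_agree M HM (fun p => adj (Psi2 p))); [now apply msmooth_on_adj|].
    intros p Hp. symmetry. exact (minv_adj _ (d2 p Hp)).
  - intros p Hp. exact (mdet_minv _ (d2 p Hp)).
  - intros p _. apply mat2_ext; simpl; ring.
  - intros p _. apply mat2_ext; simpl; ring.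
Qed.

Theorem corollary5p2 :
  forall (M : pt -> Prop) (omega Q Rf : pt -> R),
    simply_connected_domain M ->
    smooth_on M omega -> smooth_on M Q -> smooth_on M Rf ->
    (* (1) *)
    (forall Phi1 Phi2 : pt -> mat2,
       msmooth_on M Phi1 -> msmooth_on M Phi2 ->
       SL2_valued M Phi1 -> SL2_valued M Phi2 ->
       has_pu M Phi1 (fun p => mmul (Phi1 p) (U1 omega Q p)) ->
       has_pv M Phi1 (fun p => mmul (Phi1 p) (V1 omega Rf p)) ->
       has_pu M Phi2 (fun p => mmul (Phi2 p) (U2 omega Q p)) ->
       has_pv M Phi2 (fun p => mmul (Phi2 p) (V2 omega Rf p)) ->
       cmc1_conformal_timelike_immersion M omega
         (fun p => mmul (Phi1 p) (mtr (Phi2 p)))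
         (fun p => mmul (mmul (Phi1 p) kp) (mtr (Phi2 p)))) /\
    (* (2) *)
    (forall Psi1 Psi2 : pt -> mat2,
       msmooth_on M Psi1 -> msmooth_on M Psi2 ->
       SL2_valued M Psi1 -> SL2_valued M Psi2 ->
       has_pu M Psi1 (fun p => mmul (Psi1 p) (U1 omega Q p)) ->
       has_pv M Psi1 (fun p => mmul (Psi1 p) (V1 omega Rf p)) ->
       has_pu M Psi2 (fun p => mmul (Psi2 p) (U2' omega Q p)) ->
       has_pv M Psi2 (fun p => mmul (Psi2 p) (V2' omega Rf p)) ->
       cmc1_conformal_timelike_immersion M omega
         (fun p => mmul (Psi1 p) (minv (Psi2 p)))
         (fun p => mmul (mmul (Psi1 p) kp) (minv (Psi2 p)))).
Proof.
  intros M omega Q Rf [HM _] Homega _ _.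
  split; intros; [apply (cmc1_Phi M omega Q Rf) | apply (cmc1_Psi M omega Q Rf)]; assumption.
Qed.
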